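(* If $x\in\mathcal A=\mathcal O(SU_q(2))$ satisfies $xb=bx$ for all $b\in\mathcal B=\mathcal O(S^2_q)$, then $x$ is a scalar multiple of the identity.
   Context: Fix $q\in(0,1]$. $\mathcal A=\mathcal O(SU_q(2))$ is the unital $*$-algebra generated by $a,b,c,d$ subject to $ab=qba,\ ac=qca,\ bd=qdb,\ cd=qdc,\ bc=cb,\ ad=1+qbc,\ da=1+q^{-1}bc$, with $a^*=d,\ b^*=-qc,\ c^*=-q^{-1}b,\ d^*=a$. It has a linear basis of matrix coefficients $t^l_{ij}$ ($l\in\frac12\mathbb N$, $i,j\in\{-l,\dots,l\}$) of the irreducible corepresentations, with $a=t^{1/2}_{-1/2,-1/2}$, $b=t^{1/2}_{-1/2,1/2}$, $c=t^{1/2}_{1/2,-1/2}$, $d=t^{1/2}_{1/2,1/2}$. The Podleś sphere is the $*$-subalgebra $\mathcal B=\mathcal O(S^2_q)=\mathrm{span}\{t^l_{i0}:l\in\mathbb N,\ i\in\{-l,\dots,l\}\}$ (the fixed points of the circle action $t^l_{ij}\mapsto z^{2j}t^l_{ij}$); it is generated by $A=-q^{-1}bc$, $B=-q^{-1}ab$, $B^*$. *)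

From HB Require Import structures.
From mathcomp Require Import all_boot all_order all_algebra.
From mathcomp Require Import all_reals.
From mathcomp Require Import complex.
Set Implicit Arguments. Unset Strict Implicit. Unset Printing Implicit Defensive.
Import Order.TTheory GRing.Theory Num.Theory.
Local Open Scope ring_scope.

(* Scalars: the complex numbers C := R[i] over a real field R : realType
   (R = the reals gives the usual C). The deformation parameter q is real. *)

Definition SUq_rels (R : realType) (q : R) (A : algType R[i]) (a b c d : A) : Prop :=
  let qc := real_complex R q in
  [/\ [/\ a * b = qc *: (b * a), a * c = qc *: (c * a), b * d = qc *: (d * b)
         & c * d = qc *: (d * c)],
      b * c = c * b,
      a * d = 1 + qc *: (b * c) & d * a = 1 + qc^-1 *: (b * c)].

Inductive gen_subalg (K : nzRingType) (A : lalgType K) (s : seq A) : A -> Prop :=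
  | gen_base x : x \in s -> gen_subalg s x
  | gen_one : gen_subalg s 1
  | gen_add x y : gen_subalg s x -> gen_subalg s y -> gen_subalg s (x + y)
  | gen_scale (k : K) x : gen_subalg s x -> gen_subalg s (k *: x)
  | gen_mul x y : gen_subalg s x -> gen_subalg s y -> gen_subalg s (x * y).

(* (A, a, b, c, d) is (a presentation of) O(SU_q(2)): the universal unital
   C-algebra generated by a, b, c, d subject to SUq_rels, i.e. A is generated
   by a b c d, they satisfy the relations, and for every C-algebra S with
   elements satisfying the relations there is a unital algebra morphism
   A -> S sending a b c d to them. *)
Definition is_OSUq2 (R : realType) (q : R) (A : algType R[i]) (a b c d : A) : Prop :=
  [/\ SUq_rels q a b c d,
      (forall x : A, gen_subalg [:: a; b; c; d] x) &
      (forall (S : algType R[i]) (a' b' c' d' : S), SUq_rels q a' b' c' d' ->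
         exists f : A -> S,
           [/\ (forall x y, f (x + y) = f x + f y),
               (forall (k : R[i]) x, f (k *: x) = k *: f x),
               (forall x y, f (x * y) = f x * f y), f 1 = 1 &
               [/\ f a = a', f b = b', f c = c' & f d = d']])].

Definition is_SUq_star (R : realType) (q : R) (A : algType R[i]) (a b c d : A)
    (st : A -> A) : Prop :=
  let qc := real_complex R q in
  [/\ (forall x y, st (x + y) = st x + st y),
      (forall (k : R[i]) x, st (k *: x) = conjc k *: st x),
      (forall x y, st (x * y) = st y * st x),
      (forall x, st (st x) = x) &
      [/\ st a = d, st b = - (qc *: c), st c = - (qc^-1 *: b) & st d = a]].

Definition podles (R : realType) (q : R) (A : algType R[i]) (a b c d : A)
    (st : A -> A) : A -> Prop :=
  let qc := real_complex R q in
  let gA := - (qc^-1 *: (b * c)) in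
  let gB := - (qc^-1 *: (a * b)) in
  gen_subalg [:: gA; gB; st gB].

From HB Require Import structures.
From mathcomp Require Import all_boot all_order all_algebra all_reals complex.
From mathcomp Require Import boolp classical_sets functions ring zify.

(* Write apow z for a^z if z >= 0 and d^(-z) if z < 0.  The monomials
   apow z * b^m * c^n span O(SU_q(2)), by the commutation relations.  They are
   linearly independent: the relations are realised by weighted shift operators
   on functions on Z x Z, and applied to a delta function the images of the
   monomials are separated by a Vandermonde argument in the powers q^M.
   Now bc * apow z = q^(-2z) apow z * bc while bc commutes with b and c, so an
   element commuting with bc only involves monomials with z = 0; and on these,
   ab * b^m c^n = q^(m+n) b^m c^n * ab, so commuting with ab leaves only the
   constant monomial. *)

Set Implicit Arguments. Unset Strict Implicit. Unset Printing Implicit Defensive.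
Import Order.TTheory GRing.Theory Num.Theory.
Local Open Scope ring_scope.

Section Combinations.
Variables (K : pzRingType) (M : lmodType K) (I : eqType) (e : I -> M).
Implicit Types (s t : seq (K * I)) (i j : I).

Definition comb s : M := \sum_(p <- s) p.1 *: e p.2.
Definition comb_coef s i : K := \sum_(p <- s | p.2 == i) p.1.

Lemma comb_cat s t : comb (s ++ t) = comb s + comb t.
Proof. exact: big_cat. Qed.

Lemma scale_comb k s : k *: comb s = comb [seq (k * p.1, p.2) | p <- s].
Proof. by rewrite /comb big_map scaler_sumr; apply: eq_bigr => p _; rewrite scalerA. Qed.

Lemma comb_coef_seq1 k i j : comb_coef [:: (k, i)] j = if i == j then k else 0.
Proof. by rewrite /comb_coef big_cons big_nil /=; case: eqP; rewrite ?addr0. Qed.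

Lemma comb_coef_filter (P : pred I) s j :
  comb_coef [seq p <- s | P p.2] j = if P j then comb_coef s j else 0.
Proof.
rewrite /comb_coef big_filter_cond; case: ifP => Pj.
  by apply: eq_bigl => p; case: eqP => [->|]; rewrite ?Pj ?andbF.
by rewrite big1 // => p /andP[Pp /eqP ep]; move: Pj; rewrite -ep Pp.
Qed.

Lemma comb_coef_map (sigma : I -> I) (alpha : I -> K) s j :
    (forall i, i \in map snd s -> sigma i = sigma j -> i = j) ->
  comb_coef [seq (alpha p.2 * p.1, sigma p.2) | p <- s] (sigma j) =
    alpha j * comb_coef s j.
Proof.
move=> sigma_inj; rewrite /comb_coef big_map /= mulr_sumr big_seq_cond.
rewrite (eq_bigl (fun p => (p \in s) && (p.2 == j))) => [|p]; last first.
  case: (boolP (p \in s)) => //= ps; apply/eqP/eqP => [|-> //].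
  by apply: sigma_inj; apply/mapP; exists p.
by rewrite -big_seq_cond; apply: eq_bigr => p /eqP ->.
Qed.

Lemma comb_regroup s (u : seq I) : uniq u -> {subset map snd s <= u} ->
  comb s = \sum_(i <- u) comb_coef s i *: e i.
Proof.
move=> uu su; under [RHS]eq_bigr => i _ do rewrite /comb_coef scaler_suml big_mkcond.
rewrite exchange_big /comb; apply: eq_big_seq => p ps /=; rewrite -big_mkcond -big_filter.
rewrite (eq_filter (a2 := pred1 p.2)) => [|i]; last exact: eq_sym.
by rewrite filter_pred1_uniq ?big_seq1 // su //; apply/mapP; exists p.
Qed.

Lemma eq_comb s t : comb_coef s =1 comb_coef t -> comb s = comb t.
Proof.
move=> st; set u := undup (map snd (s ++ t)).
have [su tu] : {subset map snd s <= u} /\ {subset map snd t <= u}.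
  by split=> i it; rewrite mem_undup map_cat mem_cat it ?orbT.
rewrite (comb_regroup (undup_uniq _) su) (comb_regroup (undup_uniq _) tu).
by apply: eq_bigr => i _; rewrite st.
Qed.

Lemma comb_coef_cat s t i : comb_coef (s ++ t) i = comb_coef s i + comb_coef t i.
Proof. exact: big_cat. Qed.

Definition comb_free := forall s, comb s = 0 -> forall i, comb_coef s i = 0.

Lemma comb_free_coef_eq : comb_free ->
  forall s t, comb s = comb t -> comb_coef s =1 comb_coef t.
Proof.
move=> free s t st i; apply/eqP; rewrite -subr_eq0.
set t' := [seq (-1 * p.1, p.2) | p <- t].
have <- : comb_coef t' i = - comb_coef t i.
  by rewrite (comb_coef_map (sigma := id) (fun _ => -1) (fun _ _ e => e)) mulN1r.
by rewrite -comb_coef_cat free // comb_cat -scale_comb scaleN1r st subrr.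
Qed.

End Combinations.

Lemma comb_morph (K : pzRingType) (M N : lmodType K) (I : eqType) (e : I -> M)
    (f : M -> N) s :
    {morph f : x y / x + y} -> (forall k x, f (k *: x) = k *: f x) ->
  f (comb e s) = comb (f \o e) s.
Proof.
move=> fD fZ; have f0 : f 0 = 0 by apply: (addrI (f 0)); rewrite -fD !addr0.
by rewrite /comb; elim: s => [|p s IH]; rewrite ?big_nil // !big_cons fD fZ IH.
Qed.

Section QCommutation.
Variables (K : fieldType) (A : algType K).
Implicit Types (x y : A) (k : K).

Lemma qcommXr x y k m : x * y = k *: (y * x) -> x * y ^+ m = k ^+ m *: (y ^+ m * x).
Proof.
move=> xy; elim: m => [|m IH]; first by rewrite !expr0 scale1r mulr1 mul1r.
rewrite exprSr mulrA IH -scalerAl -(mulrA _ x y) xy -scalerAr scalerA mulrA.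
by rewrite -!exprSr.
Qed.

Lemma qcommXl x y k m : x * y = k *: (y * x) -> x ^+ m * y = k ^+ m *: (y * x ^+ m).
Proof.
move=> xy; elim: m => [|m IH]; first by rewrite !expr0 scale1r mulr1 mul1r.
rewrite exprS -mulrA IH -scalerAr (mulrA x y) xy -scalerAl scalerA -mulrA.
by rewrite -exprSr -exprS.
Qed.

Lemma qcommV x y k : k != 0 -> x * y = k *: (y * x) -> y * x = k^-1 *: (x * y).
Proof. by move=> k0 ->; rewrite scalerA mulVf // scale1r. Qed.

End QCommutation.

Notation pbw_index := (int * nat * nat)%type.

Section Monomials.
Variables (K : fieldType) (A : algType K) (a b c d : A).

Definition apow (z : int) : A :=
  match z with Posz n => a ^+ n | Negz n => d ^+ n.+1 end.

Definition pbw (i : pbw_index) : A := apow i.1.1 * (b ^+ i.1.2 * c ^+ i.2).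

Lemma pbw1 : pbw (0%:Z, 0%N, 0%N) = 1.
Proof. by rewrite /pbw /= !expr0 !mulr1. Qed.

End Monomials.

Lemma morph_pbw (K : fieldType) (A S : algType K) (f : A -> S) (a b c d : A) i :
    {morph f : x y / x * y} -> f 1 = 1 ->
  f (pbw a b c d i) = pbw (f a) (f b) (f c) (f d) i.
Proof.
move=> fM f1; have fX x n : f (x ^+ n) = f x ^+ n.
  by elim: n => [|n IH]; rewrite ?expr0 // !exprS fM IH.
by rewrite /pbw !fM !fX; case: i.1.1 => n; rewrite /= fX.
Qed.

Section LinearEndomorphisms.
Variables (T : pointedType) (K : comNzRingType).
Local Notation V := (T -> K^o).

Record endo := Endo { endo_fun :> V -> V; endo_linear : linear endo_fun }.

HB.instance Definition _ (f : endo) :=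
  GRing.isLinear.Build K V V *:%R (endo_fun f) (endo_linear f).

Lemma endoP (f g : endo) : endo_fun f =1 endo_fun g -> f = g.
Proof.
case: f g => f fL [g gL] /= fg; have ef : f = g by apply/funext.
by subst g; congr Endo; apply: Prop_irrelevance.
Qed.

HB.instance Definition _ := gen_eqMixin endo.
HB.instance Definition _ := gen_choiceMixin endo.

Let lin_zero : linear (fun _ : V => 0 : V).
Proof. by move=> k u v; rewrite scaler0 addr0. Qed.
Let lin_add (f g : endo) : linear (fun v => f v + g v).
Proof. by move=> k u v; rewrite !linearP scalerDr addrACA. Qed.
Let lin_opp (f : endo) : linear (fun v => - f v).
Proof. by move=> k u v; rewrite linearP opprD scalerN. Qed.
Let lin_scale k (f : endo) : linear (fun v => k *: f v).
Proof. by move=> k' u v; rewrite linearP scalerDr !scalerA mulrC. Qed.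
Let lin_id : linear (@id V).
Proof. by []. Qed.
Let lin_comp (f g : endo) : linear (fun v => f (g v)).
Proof. by move=> k u v; rewrite !linearP. Qed.

Let endo0 := Endo lin_zero.
Let endoD f g := Endo (lin_add f g).
Let endoN f := Endo (lin_opp f).
Let endoZ k f := Endo (lin_scale k f).
Let endo1 := Endo lin_id.
Let endoM f g := Endo (lin_comp f g).

Let endoDA : associative endoD.
Proof. by move=> f g h; apply: endoP => v /=; rewrite addrA. Qed.
Let endoDC : commutative endoD.
Proof. by move=> f g; apply: endoP => v /=; rewrite addrC. Qed.
Let endo0D : left_id endo0 endoD.
Proof. by move=> f; apply: endoP => v /=; rewrite add0r. Qed.
Let endoND : left_inverse endo0 endoN endoD.
Proof. by move=> f; apply: endoP => v /=; rewrite addNr. Qed.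
HB.instance Definition _ := GRing.isZmodule.Build endo endoDA endoDC endo0D endoND.

Let endoMA : associative endoM. Proof. by move=> f g h; apply: endoP. Qed.
Let endo1M : left_id endo1 endoM. Proof. by move=> f; apply: endoP. Qed.
Let endoM1 : right_id endo1 endoM. Proof. by move=> f; apply: endoP. Qed.
Let endoMDl : left_distributive endoM endoD. Proof. by move=> f g h; apply: endoP. Qed.
Let endoMDr : right_distributive endoM endoD.
Proof. by move=> f g h; apply: endoP => v /=; rewrite linearD. Qed.
Let endo1_neq0 : endo1 != endo0.
Proof.
apply/eqP => /(congr1 (fun f : endo => f (fun _ => 1) point)) /= /eqP.
by rewrite oner_eq0.
Qed.
HB.instance Definition _ :=
  GRing.Zmodule_isNzRing.Build endo endoMA endo1M endoM1 endoMDl endoMDr endo1_neq0.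

Let endoZA k l f : endoZ k (endoZ l f) = endoZ (k * l) f.
Proof. by apply: endoP => v /=; rewrite scalerA. Qed.
Let endoZ1 : left_id 1 endoZ.
Proof. by move=> f; apply: endoP => v /=; rewrite scale1r. Qed.
Let endoZDr : right_distributive endoZ endoD.
Proof. by move=> k f g; apply: endoP => v /=; rewrite scalerDr. Qed.
Let endoZDl f : {morph endoZ^~ f : k l / k + l >-> endoD k l}.
Proof. by move=> k l; apply: endoP => v /=; rewrite scalerDl. Qed.
HB.instance Definition _ :=
  GRing.Zmodule_isLmodule.Build K endo endoZA endoZ1 endoZDr endoZDl.

Let endoZAl k (f g : endo) : k *: (f * g) = (k *: f) * g.
Proof. exact: endoP. Qed.
HB.instance Definition _ := GRing.Lmodule_isLalgebra.Build K endo endoZAl.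
Let endoZAr k (f g : endo) : k *: (f * g) = f * (k *: g).
Proof. by apply: endoP => v /=; rewrite linearZ. Qed.
HB.instance Definition _ := GRing.Lalgebra_isAlgebra.Build K endo endoZAr.

Lemma endoME (f g : endo) v : (f * g) v = f (g v). Proof. by []. Qed.

Lemma endo_sumE (J : Type) (r : seq J) (F : J -> endo) v t :
  (\sum_(j <- r) F j) v t = \sum_(j <- r) F j v t.
Proof. by elim: r => [|j r IH]; rewrite ?big_nil // !big_cons -IH. Qed.

Lemma endoDE (f g : endo) v t : (f + g) v t = f v t + g v t. Proof. by []. Qed.
Lemma endoZE k (f : endo) v t : (k *: f) v t = k * f v t. Proof. by []. Qed.

Let lin_wshift (h : T -> K) (sigma : T -> T) :
  linear (fun v : V => (fun t => h t * v (sigma t)) : V).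
Proof. by move=> k u v; apply/funext => t /=; rewrite mulrDr mulrCA. Qed.

Definition wshift h sigma : endo := Endo (lin_wshift h sigma).

Lemma wshiftE h sigma v t : wshift h sigma v t = h t * v (sigma t).
Proof. by []. Qed.

Lemma wshiftX h sigma n v t :
  (wshift h sigma ^+ n) v t = (\prod_(i < n) h (iter i sigma t)) * v (iter n sigma t).
Proof.
elim: n t => [|n IH] t; first by rewrite expr0 big_ord0 mul1r.
rewrite exprS endoME wshiftE IH big_ord_recl mulrA -iterSr.
by under [in RHS]eq_bigr => i _ do rewrite iterSr.
Qed.

End LinearEndomorphisms.

Section CombinationsInAlgebra.
Variables (K : fieldType) (A : algType K) (I : eqType) (e : I -> A).
Hypothesis e_free : comb_free e.

Lemma mul_comb_eigen (y : A) (sigma : I -> I) (alpha : I -> K) s :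
    (forall i, i \in map snd s -> y * e i = alpha i *: e (sigma i)) ->
  y * comb e s = comb e [seq (alpha p.2 * p.1, sigma p.2) | p <- s].
Proof.
move=> ye; rewrite /comb mulr_sumr big_map; apply: eq_big_seq => p ps /=.
by rewrite -scalerAr ye ?scalerA ?[alpha _ * _]mulrC //; apply/mapP; exists p.
Qed.

Lemma comb_mul_eigen (y : A) (sigma : I -> I) (beta : I -> K) s :
    (forall i, i \in map snd s -> e i * y = beta i *: e (sigma i)) ->
  comb e s * y = comb e [seq (beta p.2 * p.1, sigma p.2) | p <- s].
Proof.
move=> ey; rewrite /comb mulr_suml big_map; apply: eq_big_seq => p ps /=.
by rewrite -scalerAl ey ?scalerA ?[beta _ * _]mulrC //; apply/mapP; exists p.
Qed.

Lemma comb_coef_eigen (y : A) (sigma : I -> I) (alpha beta : I -> K) s j :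
    (forall i, i \in map snd s -> sigma i = sigma j -> i = j) ->
    (forall i, i \in map snd s -> y * e i = alpha i *: e (sigma i)) ->
    (forall i, i \in map snd s -> e i * y = beta i *: e (sigma i)) ->
  y * comb e s = comb e s * y -> alpha j * comb_coef s j = beta j * comb_coef s j.
Proof.
move=> sigma_inj ye ey; rewrite (mul_comb_eigen ye) (comb_mul_eigen ey).
by move=> /(comb_free_coef_eq e_free)/(_ (sigma j)); rewrite !(comb_coef_map _ sigma_inj).
Qed.

End CombinationsInAlgebra.

Lemma poly_eq0_on_powers (F : idomainType) (x : F) (p : {poly F}) :
  injective (fun n : nat => x ^+ n) -> (forall n, p.[x ^+ n] = 0) -> p = 0.
Proof.
move=> x_inj p_root; apply/eqP; apply: contraT => p0.
have /negP[] : ~~ (size p < size p)%N by rewrite ltnn.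
rewrite -{1}(size_mkseq (fun n => x ^+ n) (size p)); apply: max_poly_roots p0 _ _.
  by apply/allP => y /mapP[n _ ->]; rewrite /root p_root.
exact: mkseq_uniq.
Qed.

Lemma expr_inj_not_root1 (F : fieldType) (x : F) :
  x != 0 -> (forall n, (0 < n)%N -> x ^+ n != 1) -> injective (fun n : nat => x ^+ n).
Proof.
move=> x0 x_not_root1.
suff le_inj m n : (m <= n)%N -> x ^+ m = x ^+ n -> m = n.
  move=> m n /= e; case: (leqP m n) => [mn|/ltnW nm]; first exact: le_inj.
  exact/esym/le_inj.
move=> /subnKC <-; move: (n - m)%N => k.
rewrite exprD -{1}(mulr1 (x ^+ m)) => /(mulfI (expf_neq0 m x0)) /esym e.
by case: k e => [|k] e; [rewrite addn0 | move: (x_not_root1 _ (ltn0Sn k)); rewrite e eqxx].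
Qed.

HB.instance Definition _ := isPointed.Build int 0.

Lemma iter_shift_fst (e : int) n (t : int * int) :
  iter n (fun t => (t.1 + e, t.2)) t = (t.1 + e *+ n, t.2).
Proof.
elim: n => [|n IH]; first by rewrite mulr0n addr0 -surjective_pairing.
by rewrite iterS IH mulrSr addrA.
Qed.

Lemma iter_shift_snd (e : int) n (t : int * int) :
  iter n (fun t => (t.1, t.2 + e)) t = (t.1, t.2 + e *+ n).
Proof.
elim: n => [|n IH]; first by rewrite mulr0n addr0 -surjective_pairing.
by rewrite iterS IH mulrSr addrA.
Qed.

Section Deformation.
Variables (R : realType) (q : R).
Hypotheses (q_neq0 : q != 0) (q_not_root1 : forall n, (0 < n)%N -> q ^+ n != 1).
Local Notation C := R[i].
Local Notation qc := (real_complex R q).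

Lemma qc_neq0 : qc != 0.
Proof. by rewrite -(rmorph0 (real_complex R)) (inj_eq (@complexI _)). Qed.

Lemma qcX_neq1 n : (0 < n)%N -> qc ^+ n != 1.
Proof.
move=> n0; rewrite -rmorphXn -(rmorph1 (real_complex R)).
by rewrite (inj_eq (@complexI _)) q_not_root1.
Qed.

Lemma qcX_inj : injective (fun n : nat => qc ^+ n).
Proof. exact: expr_inj_not_root1 qc_neq0 qcX_neq1. Qed.

Lemma qcz_sqr_neq1 (m : int) : 0 < m -> qc ^ m * qc ^ m != 1.
Proof.
by case: m => // p p0; rewrite -exprnP -exprD qcX_neq1 //; lia.
Qed.

Section Model.
Local Notation endoC := (endo (int * int)%type C).
Implicit Types t : int * int.

(* Weighted shifts on functions of (n, k): the first coordinate records the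
   a-degree and the second the b-degree minus the c-degree of a monomial. *)
Definition model_a : endoC := wshift (fun _ => 1) (fun t => (t.1 + 1, t.2)).
Definition model_b : endoC := wshift (fun t => qc ^ t.1) (fun t => (t.1, t.2 - 1)).
Definition model_c : endoC := wshift (fun t => - qc ^ (t.1 + 1)) (fun t => (t.1, t.2 + 1)).
Definition model_d : endoC :=
  wshift (fun t => 1 - qc ^ t.1 * qc ^ t.1) (fun t => (t.1 - 1, t.2)).

Lemma model_rels : SUq_rels q model_a model_b model_c model_d.
Proof.
have qc0 := qc_neq0; have expS (n : int) : qc ^ (n + 1) = qc ^ n * qc.
  by rewrite expfzDr // expr1z.
have expP (n : int) : qc ^ (n - 1) = qc ^ n / qc.
  by rewrite expfzDr // -invr_expz expr1z.
by split; first split; apply: endoP => v; apply/funext => -[n k];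
  rewrite ?endoDE ?endoZE !endoME !wshiftE /= ?addrK ?subrK ?expS ?expP; field.
Qed.

Lemma model_apowE z : exists2 E : int -> C, (forall N, 0 <= N + z -> E N != 0) &
  forall v N k, apow model_a model_d z v (N, k) = E N * v (N + z, k).
Proof.
case: z => j /=.
  exists (fun _ => 1) => [N _|v N k]; first exact: oner_neq0.
  by rewrite wshiftX iter_shift_fst big1 ?mul1r // natz.
pose E N := \prod_(i < j.+1) (1 - qc ^ (N + (-1) *+ i) * qc ^ (N + (-1) *+ i)).
exists E => [N|v N k].
  rewrite NegzE subr_ge0 => jN; apply/prodf_neq0 => i _; rewrite subr_eq0 eq_sym.
  by rewrite qcz_sqr_neq1 // mulNrn natz subr_gt0 (lt_le_trans _ jN) // ltz_nat ltn_ord.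
rewrite wshiftX iter_shift_fst NegzE mulNrn natz.
by congr (_ * _); apply: eq_bigr => i _; rewrite iter_shift_fst.
Qed.

Lemma model_bcE m n v N k : (model_b ^+ m) ((model_c ^+ n) v) (N, k) =
  (qc ^ N) ^+ m * ((- qc ^ (N + 1)) ^+ n * v (N, k - m%:Z + n%:Z)).
Proof.
rewrite !wshiftX !iter_shift_snd mulNrn !natz /=.
under eq_bigr => i _ do rewrite iter_shift_snd.
under [X in _ * (X * _)]eq_bigr => i _ do rewrite iter_shift_snd.
by rewrite !prodr_const !card_ord.
Qed.

Definition model_pbw := pbw model_a model_b model_c model_d.

Definition delta (t0 : int * int) : int * int -> C^o := fun t => (t == t0)%:R.

Lemma model_comb_delta s z0 r (M : nat) : exists2 E : C, E != 0 &
  comb model_pbw s (delta (M%:Z, 0)) (M%:Z - z0, r) =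
  E * \sum_(p <- s | (p.2.1.1 == z0) && (p.2.1.2%:Z - p.2.2%:Z == r))
        p.1 * ((- qc) ^+ p.2.2 * (qc ^+ M) ^+ (p.2.1.2 + p.2.2)).
Proof.
have [E E0 apow_z0] := model_apowE z0.
exists (E (M%:Z - z0)); first by apply: E0; rewrite subrK.
rewrite /comb endo_sumE [in RHS]big_mkcond mulr_sumr; apply: eq_bigr => -[l [[z m] n]] _.
rewrite endoZE /model_pbw /pbw endoME /=; have [-> | zz] := eqVneq z z0.
  rewrite apow_z0 subrK model_bcE /delta xpair_eqE eqxx /=.
  have -> : (r - m%:Z + n%:Z == 0) = (m%:Z - n%:Z == r) by apply/eqP/eqP; lia.
  case: eqP => _; last by rewrite !mulr0.
  by rewrite mulr1n expfzDr ?qc_neq0 // expr1z -exprnP -mulrN exprMn exprD; ring.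
have [E' _ ->] := model_apowE z; rewrite model_bcE /delta xpair_eqE.
suff /negbTE -> : M%:Z - z0 + z != M%:Z by rewrite !mulr0.
by apply: contra_neq zz; lia.
Qed.

Lemma model_pbw_free : comb_free model_pbw.
Proof.
move=> s s0 [[z0 m0] n0].
pose cond (p : C * pbw_index) :=
  (p.2.1.1 == z0) && (p.2.1.2%:Z - p.2.2%:Z == m0%:Z - n0%:Z).
pose P : {poly C} :=
  \sum_(p <- s | cond p) (p.1 * (- qc) ^+ p.2.2) *: 'X^(p.2.1.2 + p.2.2).
have P0 : P = 0.
  apply: (poly_eq0_on_powers qcX_inj) => M.
  have [E E0] := model_comb_delta s z0 (m0%:Z - n0%:Z) M.
  rewrite s0 => /esym /eqP; rewrite mulf_eq0 (negbTE E0) /= => /eqP <-.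
  by rewrite horner_sum; apply: eq_bigr => p _; rewrite hornerZ hornerXn mulrA.
have : P`_(m0 + n0) = comb_coef s (z0, m0, n0) * (- qc) ^+ n0.
  rewrite coef_sum /comb_coef mulr_suml big_mkcond [RHS]big_mkcond.
  apply: eq_bigr => -[l [[z m] n]] _.
  rewrite /cond /= coefZ coefXn.
  have [[-> -> ->]|ne] := eqVneq (z, m, n) (z0, m0, n0); first by rewrite !eqxx mulr1.
  case: ifP => // /andP[/eqP ez /eqP emn].
  suff /negbTE -> : (m0 + n0 != m + n)%N by rewrite mulr0.
  apply: contraNneq ne => /eqP e; rewrite ez.
  by have [-> ->] : m = m0 /\ n = n0 by lia.
rewrite P0 coef0 => /esym /eqP; rewrite mulf_eq0 expf_eq0 oppr_eq0 (negbTE qc_neq0).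
by rewrite andbF orbF => /eqP.
Qed.

End Model.

Section Presentation.
Variables (A : algType C) (a b c d : A).
Hypothesis Apres : is_OSUq2 q a b c d.

Let rels : SUq_rels q a b c d. Proof. by case: Apres. Qed.
Let rel_ab : a * b = qc *: (b * a). Proof. by case: rels => -[]. Qed.
Let rel_ac : a * c = qc *: (c * a). Proof. by case: rels => -[]. Qed.
Let rel_bd : b * d = qc *: (d * b). Proof. by case: rels => -[]. Qed.
Let rel_cd : c * d = qc *: (d * c). Proof. by case: rels => -[]. Qed.
Let rel_bc : b * c = c * b. Proof. by case: rels. Qed.
Let rel_ad : a * d = 1 + qc *: (b * c). Proof. by case: rels. Qed.
Let rel_da : d * a = 1 + qc^-1 *: (b * c). Proof. by case: rels. Qed.
Let rel_ba : b * a = qc^-1 *: (a * b). Proof. exact: qcommV qc_neq0 rel_ab. Qed.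
Let rel_ca : c * a = qc^-1 *: (a * c). Proof. exact: qcommV qc_neq0 rel_ac. Qed.
Let rel_cb : c * b = 1 *: (b * c). Proof. by rewrite scale1r rel_bc. Qed.

Local Notation apow := (apow a d).
Local Notation pbw := (pbw a b c d).

Lemma bcmon_a m n : b ^+ m * c ^+ n * a = qc^-1 ^+ (m + n) *: (a * (b ^+ m * c ^+ n)).
Proof.
rewrite -mulrA (qcommXl n rel_ca) -scalerAr (mulrA _ a) (qcommXl m rel_ba) -scalerAl.
by rewrite scalerA -mulrA exprD mulrC.
Qed.

Lemma bcmon_d m n : b ^+ m * c ^+ n * d = qc ^+ (m + n) *: (d * (b ^+ m * c ^+ n)).
Proof.
rewrite -mulrA (qcommXl n rel_cd) -scalerAr (mulrA _ d) (qcommXl m rel_bd) -scalerAl.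
by rewrite scalerA -mulrA exprD mulrC.
Qed.

Lemma bcmon_b m n : b ^+ m * c ^+ n * b = b ^+ m.+1 * c ^+ n.
Proof. by rewrite -mulrA (qcommXl n rel_cb) expr1n scale1r mulrA -exprSr. Qed.

Lemma bcmon_c m n : b ^+ m * c ^+ n * c = b ^+ m * c ^+ n.+1.
Proof. by rewrite -mulrA -exprSr. Qed.

Lemma bc_bcmon m n : b * c * (b ^+ m * c ^+ n) = b ^+ m.+1 * c ^+ n.+1.
Proof.
rewrite -mulrA [c * _]mulrA (qcommXr m rel_cb) expr1n scale1r.
by rewrite -mulrA mulrA -exprS -exprS.
Qed.

Lemma pbw_bc i : pbw i * (b * c) = pbw (i.1.1, i.1.2.+1, i.2.+1).
Proof. by rewrite /pbw -mulrA (mulrA _ b c) bcmon_b bcmon_c. Qed.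

Definition spanned (x : A) := exists s, x = comb pbw s.

Lemma spannedD x y : spanned x -> spanned y -> spanned (x + y).
Proof. by move=> [s ->] [t ->]; exists (s ++ t); rewrite comb_cat. Qed.

Lemma spannedZ k x : spanned x -> spanned (k *: x).
Proof. by move=> [s ->]; exists [seq (k * p.1, p.2) | p <- s]; rewrite scale_comb. Qed.

Lemma spanned_pbw i : spanned (pbw i).
Proof. by exists [:: (1, i)]; rewrite /comb big_seq1 scale1r. Qed.

Lemma apowN j : apow (- j%:Z) = d ^+ j.
Proof. by case: j. Qed.

Lemma spanned_apow_a z m n : spanned (apow z * a * (b ^+ m * c ^+ n)).
Proof.
case: z => [k|j] /=; first by rewrite -exprSr; apply: (spanned_pbw (k.+1 : int, m, n)).
rewrite exprSr -(mulrA _ d a) rel_da mulrDr mulr1 mulrDl -scalerAr -scalerAl.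
rewrite -(mulrA _ (b * c)) bc_bcmon -apowN.
exact/spannedD/spannedZ/(spanned_pbw (- j%:Z, m.+1, n.+1))/(spanned_pbw (- j%:Z, m, n)).
Qed.

Lemma spanned_apow_d z m n : spanned (apow z * d * (b ^+ m * c ^+ n)).
Proof.
case: z => [[|k]|j] /=.
- by rewrite expr0 mul1r -(expr1 d); apply: (spanned_pbw (Negz 0, m, n)).
- rewrite exprSr -(mulrA _ a d) rel_ad mulrDr mulr1 mulrDl -scalerAr -scalerAl.
  rewrite -(mulrA _ (b * c)) bc_bcmon.
  exact/spannedD/spannedZ/(spanned_pbw (k%:Z, m.+1, n.+1))/(spanned_pbw (k%:Z, m, n)).
- by rewrite -exprSr; apply: (spanned_pbw (Negz j.+1, m, n)).
Qed.

Lemma spanned_pbw_mul i g : g \in [:: a; b; c; d] -> spanned (pbw i * g).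
Proof.
case: i => [[z m] n]; rewrite !inE /pbw -mulrA => /or4P[] /eqP ->.
- by rewrite bcmon_a -scalerAr (mulrA _ a); apply/spannedZ/spanned_apow_a.
- by rewrite bcmon_b; apply: (spanned_pbw (z, m.+1, n)).
- by rewrite bcmon_c; apply: (spanned_pbw (z, m, n.+1)).
- by rewrite bcmon_d -scalerAr (mulrA _ d); apply/spannedZ/spanned_apow_d.
Qed.

Lemma spanned_mul x y : gen_subalg [:: a; b; c; d] y -> spanned x -> spanned (x * y).
Proof.
move=> gen_y; elim: gen_y x => {y}
  [g g_gen x|x|y1 y2 _ IH1 _ IH2 x|k y _ IH x|y1 y2 _ IH1 _ IH2 x].
- case=> s ->; elim: s => [|p s IH]; first by exists [::]; rewrite /comb !big_nil mul0r.
  by rewrite /comb big_cons mulrDl -scalerAl; apply/spannedD/IH/spannedZ/spanned_pbw_mul.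
- by rewrite mulr1.
- by move=> x_span; rewrite mulrDr; apply: spannedD; [apply: IH1|apply: IH2].
- by move=> x_span; rewrite -scalerAr; apply/spannedZ/IH.
- by move=> x_span; rewrite mulrA; apply/IH2/IH1.
Qed.

Lemma pbw_spanning x : spanned x.
Proof.
have [_ gen _] := Apres; rewrite -(mul1r x); apply: spanned_mul (gen x) _.
by rewrite -(pbw1 a b c d); apply: spanned_pbw.
Qed.

Lemma pbw_free : comb_free pbw.
Proof.
move=> s s0; apply: model_pbw_free; have [_ _ univ] := Apres.
have [f [fD fZ fM f1 [fa fb fc fd]]] := univ _ _ _ _ _ model_rels.
have <- : f (comb pbw s) = comb model_pbw s.
  rewrite comb_morph //; congr comb; apply/funext => i /=.
  by rewrite (morph_pbw _ _ _ _ _ fM f1) fa fb fc fd.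
by rewrite s0; apply: (addrI (f 0)); rewrite -fD !addr0.
Qed.

Definition bc_twist (z : int) : C :=
  match z with Posz k => (qc^-1 * qc^-1) ^+ k | Negz j => (qc * qc) ^+ j.+1 end.

Lemma bc_twist_neq1 z : z != 0 -> bc_twist z != 1.
Proof.
case: z => [[|k]|j] //= _; rewrite -expr2 -exprM ?exprVn ?invr_eq1; exact: qcX_neq1.
Qed.

Lemma bc_a : b * c * a = (qc^-1 * qc^-1) *: (a * (b * c)).
Proof. by rewrite -mulrA rel_ca -scalerAr (mulrA b a) rel_ba -scalerAl scalerA -mulrA. Qed.

Lemma bc_d : b * c * d = (qc * qc) *: (d * (b * c)).
Proof. by rewrite -mulrA rel_cd -scalerAr (mulrA b d) rel_bd -scalerAl scalerA -mulrA. Qed.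

Lemma bc_apow z : b * c * apow z = bc_twist z *: (apow z * (b * c)).
Proof. by case: z => [k|j]; [exact: qcommXr bc_a | exact: qcommXr bc_d]. Qed.

Lemma bc_pbw i : b * c * pbw i = bc_twist i.1.1 *: pbw (i.1.1, i.1.2.+1, i.2.+1).
Proof. by rewrite /pbw (mulrA (b * c)) bc_apow -scalerAl -mulrA bc_bcmon. Qed.

Lemma ab_pbw0 m n : a * b * pbw (0, m, n) = pbw (1, m.+1, n).
Proof. by rewrite /pbw /= expr0 mul1r expr1 -!mulrA (mulrA b) -exprS. Qed.

Lemma pbw0_ab m n : pbw (0, m, n) * (a * b) = qc^-1 ^+ (m + n) *: pbw (1, m.+1, n).
Proof.
by rewrite /pbw /= expr0 !mul1r expr1 (mulrA _ a b) bcmon_a -scalerAl -mulrA bcmon_b.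
Qed.

Lemma comb_coef_commute_bc s j :
  b * c * comb pbw s = comb pbw s * (b * c) -> j.1.1 != 0 -> comb_coef s j = 0.
Proof.
move=> comm jz; have /eqP : bc_twist j.1.1 * comb_coef s j = 1 * comb_coef s j.
  apply: (comb_coef_eigen pbw_free (sigma := fun i => (i.1.1, i.1.2.+1, i.2.+1))
    (alpha := fun i => bc_twist i.1.1) (beta := fun=> 1)) comm.
  - by case: j {jz} => [[z m] n] [[z' m'] n'] _ /= [-> -> ->].
  - by move=> i _; apply: bc_pbw.
  - by move=> i _; rewrite scale1r pbw_bc.
by rewrite -subr_eq0 -mulrBl mulf_eq0 subr_eq0 (negbTE (bc_twist_neq1 jz)) => /eqP.
Qed.

Lemma comb_coef_commute_ab s j : all (fun p => p.2.1.1 == 0) s ->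
    a * b * comb pbw s = comb pbw s * (a * b) ->
  j.1.1 = 0 -> (0 < j.1.2 + j.2)%N -> comb_coef s j = 0.
Proof.
move=> /allP s0 comm jz mn0.
have /eqP : 1 * comb_coef s j = qc^-1 ^+ (j.1.2 + j.2) * comb_coef s j.
  have {}s0 i : i \in map snd s -> i.1.1 = 0.
    by case/mapP=> p ps ->; apply/eqP/s0.
  apply: (comb_coef_eigen pbw_free (sigma := fun i => (1%:Z, i.1.2.+1, i.2))
    (alpha := fun=> 1) (beta := fun i => qc^-1 ^+ (i.1.2 + i.2))) comm.
  - by move=> i /s0; case: i j jz {mn0} => [[z m] n] [[z' m'] n'] /= -> -> [-> ->].
  - by move=> [[z m] n] /s0 /= ->; rewrite scale1r ab_pbw0.
  - by move=> [[z m] n] /s0 /= ->; rewrite pbw0_ab.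
rewrite -subr_eq0 -mulrBl mulf_eq0 subr_eq0 eq_sym exprVn invr_eq1.
by rewrite (negbTE (qcX_neq1 mn0)) => /eqP.
Qed.

Lemma commute_bc_ab_scalar x :
  x * (b * c) = b * c * x -> x * (a * b) = a * b * x -> exists k, x = k%:A.
Proof.
move=> x_bc x_ab; have [s xs] := pbw_spanning x.
have comm_bc : b * c * comb pbw s = comb pbw s * (b * c) by rewrite -xs x_bc.
set s0 := [seq p <- s | p.2.1.1 == 0].
have coef_s0 : comb_coef s0 =1 comb_coef s.
  move=> i; rewrite /s0 (comb_coef_filter (fun i : pbw_index => i.1.1 == 0)).
  by case: ifP => // /negbT iz; rewrite (comb_coef_commute_bc comm_bc iz).
have xs0 : x = comb pbw s0 by rewrite xs (eq_comb _ (fun i => esym (coef_s0 i))).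
have comm_ab : a * b * comb pbw s0 = comb pbw s0 * (a * b) by rewrite -xs0 x_ab.
pose i0 : pbw_index := (0%:Z, 0%N, 0%N).
exists (comb_coef s0 i0); rewrite xs0 (eq_comb pbw (t := [:: (comb_coef s0 i0, i0)])).
  by rewrite /comb big_seq1 pbw1.
move=> i; rewrite comb_coef_seq1; case: eqP => [<- //|/eqP ne].
have [iz|iz] := eqVneq i.1.1 0; last by rewrite coef_s0 (comb_coef_commute_bc comm_bc).
rewrite (comb_coef_commute_ab (filter_all _ _) comm_ab iz) //.
by case: i ne iz => [[z [|m]] [|n]] //= /eqP ne z0; case: ne; rewrite z0.
Qed.

End Presentation.

End Deformation.

Theorem mainTheorem15 (R : realType) (q : R) (hq0 : 0 < q) (hq1 : q < 1)
  (A : algType R[i]) (a b c d : A) (st : A -> A)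
  (hA : is_OSUq2 q a b c d) (hst : is_SUq_star q a b c d st)
  (x : A) (hx : forall y : A, podles q a b c d st y -> x * y = y * x) :
  exists k : R[i], x = k%:A.
Proof.
have q_neq0 : q != 0 by rewrite gt_eqF.
have q_not_root1 n : (0 < n)%N -> q ^+ n != 1.
  by move=> n0; rewrite lt_eqF // exprn_ilt1 ?ltW // -lt0n.
have commute_scaled y :
    podles q a b c d st (- ((real_complex R q)^-1 *: y)) -> x * y = y * x.
  move=> /hx; rewrite mulrN mulNr -scalerAr -scalerAl => /oppr_inj.
  by apply: scalerI; rewrite invr_neq0 ?qc_neq0.
apply: (commute_bc_ab_scalar q_neq0 q_not_root1 hA); apply: commute_scaled; apply: gen_base.
  by rewrite !inE eqxx.
by rewrite !inE eqxx orbT.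
Qed.
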